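(* Let $f,g:\mathbb R\to\mathbb R$ be two convex functions. Define $\psi:\mathbb R\to(-\infty,\infty]$ by $\psi=g-(g-f)^c$. Then $\psi$ is convex.
   Context: For $h:\mathbb R\to(-\infty,\infty)$, $h^c$ denotes the largest convex function lying below $h$ (the convex hull). It may be identically $-\infty$; a function identically equal to $-\infty$ or $+\infty$ is deemed convex. *)

From HB Require Import structures.
From mathcomp Require Import all_boot all_order all_algebra.
From mathcomp Require Import all_classical all_reals.
From mathcomp Require Import ereal.
Set Implicit Arguments. Unset Strict Implicit. Unset Printing Implicit Defensive.
Import Order.TTheory GRing.Theory Num.Theory.
Local Open Scope ring_scope.
Local Open Scope classical_set_scope.

Definition convex_fun (R : realType) (f : R -> R) : Prop :=
  forall (x y t : R), 0 <= t -> t <= 1 ->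
    f (t * x + (1 - t) * y) <= t * f x + (1 - t) * f y.

(* Convexity of an extended-real-valued function R -> \bar R, via convexity
   of the epigraph (the standard definition; the constant functions -oo and
   +oo are convex). *)
Definition econvex_fun (R : realType) (k : R -> \bar R) : Prop :=
  forall (x y t a b : R), 0 <= t -> t <= 1 ->
    (k x <= a%:E)%E -> (k y <= b%:E)%E ->
    (k (t * x + (1 - t) * y)%R <= (t * a + (1 - t) * b)%R%:E)%E.

Definition conv_hull (R : realType) (h : R -> R) : R -> \bar R :=
  fun x => ereal_sup [set k x | k in
    [set k : R -> \bar R | econvex_fun k /\ (forall y, (k y <= (h y)%:E)%E)]].

(** By the chord criterion for convexity it suffices to show: if an affine
    [L] satisfies [g - h^c <= L] at [x] and [y], i.e. [G := g - L <= h^c]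
    there, then [G <= h^c] on [[x, y]].  As [h^c <= h = g - f], we get
    [f <= L] at [x] and [y], hence on [[x, y]] by convexity of [f], i.e.
    [G <= h] on [[x, y]].  Since [G] is convex, the function equal to
    [max (h^c, G)] on [[x, y]] and to [h^c] elsewhere is a convex minorant of
    [h], so it lies below [h^c]. *)
From HB Require Import structures.
From mathcomp Require Import all_boot all_order all_algebra.
From mathcomp Require Import all_classical all_reals.
From mathcomp Require Import ereal.
From mathcomp Require Import ring lra.
Import Order.TTheory GRing.Theory Num.Theory.

Local Open Scope ring_scope.

Section ExtendedConvexity.
Context {R : realType}.
Implicit Types (k H : R -> \bar R) (G h : R -> R).

Lemma econvex_fun_chord {k u w v m c} : econvex_fun k ->
  u <= w -> w <= v ->
  (k u <= (m * u + c)%:E)%E -> (k v <= (m * v + c)%:E)%E ->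
  (k w <= (m * w + c)%:E)%E.
Proof.
move=> convk uw wv ku kv.
have [eq_uv | neq_uv] := eqVneq u v.
  by have -> : w = u by apply/eqP; rewrite eq_le uw eq_uv wv.
have uv := le_trans uw wv.
have vu_neq0 : v - u != 0 by rewrite subr_eq0 eq_sym.
set t := (v - w) / (v - u).
have t_ge0 : 0 <= t by rewrite /t divr_ge0 ?subr_ge0.
have tC : 1 - t = (w - u) / (v - u) by rewrite /t; field.
have t_le1 : t <= 1 by rewrite -subr_ge0 tC divr_ge0 ?subr_ge0.
have -> : w = t * u + (1 - t) * v by rewrite tC /t; field.
have -> : m * (t * u + (1 - t) * v) + c = t * (m * u + c) + (1 - t) * (m * v + c)
  by ring.
exact: convk.
Qed.

(* Use the chord inequality for the affine function through [(x, a)] and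
   [(y, b)]. *)
Lemma chord_econvex_fun k :
  (forall u w v m c, u <= w -> w <= v ->
     (k u <= (m * u + c)%:E)%E -> (k v <= (m * v + c)%:E)%E ->
     (k w <= (m * w + c)%:E)%E) ->
  econvex_fun k.
Proof.
move=> chordk x y t a b t_ge0 t_le1 kx ky.
have [eq_xy | neq_xy] := eqVneq x y.
  subst y; have -> : t * x + (1 - t) * x = x by ring.
  have [ab | ba] := leP a b.
    by apply: le_trans kx _; rewrite lee_fin; nra.
  by apply: le_trans ky _; rewrite lee_fin; nra.
have xy_neq0 : x - y != 0 by rewrite subr_eq0.
set m := (a - b) / (x - y); set c := a - m * x.
have La : m * x + c = a by rewrite /c; ring.
have Lb : m * y + c = b by rewrite /c /m; field.
have <- : m * (t * x + (1 - t) * y) + c = t * a + (1 - t) * b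
  by rewrite -La -Lb; ring.
have [le_xy | lt_yx] := leP x y.
  by apply: (chordk x _ y); rewrite ?La ?Lb //; nra.
by apply: (chordk y _ x); rewrite ?La ?Lb //; nra.
Qed.

Lemma convex_fun_econvex {G} : convex_fun G -> econvex_fun (fun r => (G r)%:E).
Proof.
move=> convG x y t a b t_ge0 t_le1; rewrite !lee_fin => Gx Gy.
apply: le_trans (convG x y t t_ge0 t_le1) _; nra.
Qed.

Lemma convex_funB_affine {G} m c :
  convex_fun G -> convex_fun (fun r => G r - (m * r + c)).
Proof.
move=> convG x y t t_ge0 t_le1; have := convG x y t t_ge0 t_le1.
have -> : m * (t * x + (1 - t) * y) + c = t * (m * x + c) + (1 - t) * (m * y + c)
  by ring.
lra.
Qed.

Lemma lee_finBl (a b : R) (e : \bar R) :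
  (a%:E - e <= b%:E)%E = ((a - b)%:E <= e)%E.
Proof.
by case: e => [r| |]; rewrite /= ?leey ?leNye // -EFinB !lee_fin lerBlDr lerBlDl.
Qed.

Lemma conv_hull_le h r : (conv_hull h r <= (h r)%:E)%E.
Proof. by apply: ge_ereal_sup => _ [k [_ kh] <-]. Qed.

Lemma le_conv_hull {h k} : econvex_fun k -> (forall y, (k y <= (h y)%:E)%E) ->
  forall r, (k r <= conv_hull h r)%E.
Proof. by move=> convk kh r; apply: ereal_sup_ubound; exists k. Qed.

Lemma econvex_conv_hull h : econvex_fun (conv_hull h).
Proof.
move=> x y t a b t_ge0 t_le1 Hx Hy.
apply: ge_ereal_sup => _ [k [convk kh] <-].
by apply: (convk); rewrite // (le_trans (le_conv_hull convk kh _)).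
Qed.

Definition patch_max (H : R -> \bar R) (G : R -> R) (x y r : R) : \bar R :=
  if x <= r <= y then Order.max (H r) (G r)%:E else H r.

Lemma le_patch_max {H G x y} r : (H r <= patch_max H G x y r)%E.
Proof. by rewrite /patch_max; case: ifP => // _; rewrite le_max lexx. Qed.

Section PatchMax.
Variables (H : R -> \bar R) (G : R -> R) (x y : R).
Hypotheses (convH : econvex_fun H) (convG : convex_fun G).
Hypotheses (GHx : ((G x)%:E <= H x)%E) (GHy : ((G y)%:E <= H y)%E).
Let patch := patch_max H G x y.

(* Below [w], the affine majorant already dominates [G] at [u] (if [u] is in
   the segment) or at [x] (by convexity of [H] on [[u, v]]). *)
Let affine_ge_G_left {u w v m c} : x <= w -> w <= y -> u <= w -> w <= v ->
  (patch u <= (m * u + c)%:E)%E -> (patch v <= (m * v + c)%:E)%E ->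
  exists2 p, p <= w & ((G p)%:E <= (m * p + c)%:E)%E.
Proof.
move=> xw wy uw wv pu pv.
have [xu | ux] := leP x u.
  exists u => //; move: pu.
  by rewrite /patch /patch_max xu (le_trans uw wy) ge_max => /andP[].
exists x => //; apply: le_trans GHx _.
apply: econvex_fun_chord convH (ltW ux) (le_trans xw wv) _ _.
  exact: le_trans (le_patch_max u) pu.
exact: le_trans (le_patch_max v) pv.
Qed.

Let affine_ge_G_right {u w v m c} : x <= w -> w <= y -> u <= w -> w <= v ->
  (patch u <= (m * u + c)%:E)%E -> (patch v <= (m * v + c)%:E)%E ->
  exists2 q, w <= q & ((G q)%:E <= (m * q + c)%:E)%E.
Proof.
move=> xw wy uw wv pu pv.
have [vy | yv] := leP v y.
  exists v => //; move: pv.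
  by rewrite /patch /patch_max vy (le_trans xw wv) ge_max => /andP[].
exists y => //; apply: le_trans GHy _.
apply: econvex_fun_chord convH (le_trans uw wy) (ltW yv) _ _.
  exact: le_trans (le_patch_max u) pu.
exact: le_trans (le_patch_max v) pv.
Qed.

Lemma econvex_patch_max : econvex_fun patch.
Proof.
apply: chord_econvex_fun => u w v m c uw wv pu pv.
have Hw := econvex_fun_chord convH uw wv
  (le_trans (le_patch_max u) pu) (le_trans (le_patch_max v) pv).
rewrite /patch /patch_max; case: ifP => [/andP[xw wy] | _]; last exact: Hw.
rewrite ge_max Hw /=.
have [p pw Gp] := affine_ge_G_left xw wy uw wv pu pv.
have [q wq Gq] := affine_ge_G_right xw wy uw wv pu pv.
exact: econvex_fun_chord (convex_fun_econvex convG) pw wq Gp Gq.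
Qed.

End PatchMax.
Arguments econvex_patch_max {H G x y}.

Lemma le_conv_hull_segment {h G x y} : convex_fun G ->
  ((G x)%:E <= conv_hull h x)%E -> ((G y)%:E <= conv_hull h y)%E ->
  (forall r, x <= r -> r <= y -> G r <= h r) ->
  forall z, x <= z -> z <= y -> ((G z)%:E <= conv_hull h z)%E.
Proof.
move=> convG GHx GHy Gh z xz zy.
have patch_le_h r : (patch_max (conv_hull h) G x y r <= (h r)%:E)%E.
  rewrite /patch_max; case: ifP => [/andP[xr ry] | _]; last exact: conv_hull_le.
  by rewrite ge_max conv_hull_le lee_fin Gh.
have convP := econvex_patch_max (econvex_conv_hull h) convG GHx GHy.
apply: le_trans (le_conv_hull convP patch_le_h z).
by rewrite /patch_max xz zy le_max lexx orbT.
Qed.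

End ExtendedConvexity.

Theorem lemma2p2 (R : realType) (f g : R -> R) :
  convex_fun f -> convex_fun g ->
  econvex_fun (fun x : R => ((g x)%:E - conv_hull (fun y => (g y - f y)%R) x)%E).
Proof.
move=> convf convg.
set h := fun y => g y - f y.
apply: chord_econvex_fun => x z y m c xz zy.
rewrite !lee_finBl => GHx GHy.
set G := fun r => g r - (m * r + c).
have f_le_affine r : ((G r)%:E <= conv_hull h r)%E ->
    ((f r)%:E <= (m * r + c)%:E)%E.
  move=> GHr; have := le_trans GHr (conv_hull_le h r).
  by rewrite !lee_fin /G /h lerD2l lerN2.
have Gh r : x <= r -> r <= y -> G r <= h r.
  move=> xr ry; have := econvex_fun_chord (convex_fun_econvex convf) xr ry
    (f_le_affine x GHx) (f_le_affine y GHy).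
  by rewrite lee_fin /G /h lerD2l lerN2.
exact: le_conv_hull_segment (convex_funB_affine m c convg) GHx GHy Gh z xz zy.
Qed.
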